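(* Let $\bm{C}\in\mathbb{R}_+^{n\times m}$ be a cost matrix with nonnegative entries, let $\bm{a}\in\mathbb{R}_+^n$, let $\bm{b}\in\mathbb{R}_+^m$ be a positive measure with total mass $c_{\bm{b}}=\sum_{j=1}^m\bm{b}_j$, let $\tau>0$, and let $r$ be an integer with $2\le r\le\min\{n,m\}$. Let $\mathrm{SR}\text{-}\mathrm{W}^\star(\mu_{\bm{b}})$ be the optimal value of the semi-relaxed problem $\min\{\langle\bm{C},\bm{P}\rangle_F+\tau\,\mathrm{KL}(\bm{P}\bm{1}_m\|\bm{a}):\bm{P}\in\mathbb{R}_+^{n\times m},\ \bm{P}^{\mathrm T}\bm{1}_n=\bm{b}\}$ and $\mathrm{SR}\text{-}\mathrm{W}^\star_r(\mu_{\bm{b}})$ the optimal value of the same problem with the additional constraint $\mathrm{rk}_+(\bm{P})\le r$. Then $$\big|\mathrm{SR}\text{-}\mathrm{W}^\star_r(\mu_{\bm{b}})-\mathrm{SR}\text{-}\mathrm{W}^\star(\mu_{\bm{b}})\big|\le c_{\bm{b}}\Big(\max_{p,q}\bm{C}_{pq}-\min_{p,q}\bm{C}_{pq}\Big)\ln\!\big(\min\{n,m\}/(r-1)\big).$$ In particular, for probability vectors $\bm{a}\in\Delta_n$, $\bm{b}\in\Delta_m$, letting $\mathrm{W}^\star(\mu_{\bm{a}},\mu_{\bm{b}})=\min_{\bm{P}\in\Pi_{\bm{a},\bm{b}}}\langle\bm{C},\bm{P}\rangle_F$ and $\mathrm{W}^\star_r(\mu_{\bm{a}},\mu_{\bm{b}})=\min_{\bm{P}\in\Pi_{\bm{a},\bm{b}},\,\mathrm{rk}_+(\bm{P})\le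 r}\langle\bm{C},\bm{P}\rangle_F$, one has $$\big|\mathrm{W}^\star_r(\mu_{\bm{a}},\mu_{\bm{b}})-\mathrm{W}^\star(\mu_{\bm{a}},\mu_{\bm{b}})\big|\le\Big(\max_{p,q}\bm{C}_{pq}-\min_{p,q}\bm{C}_{pq}\Big)\ln\!\big(\min\{n,m\}/(r-1)\big).$$
   Context: The nonnegative rank $\mathrm{rk}_+(\bm{M})$ of a nonnegative matrix is the least number of nonnegative rank-one matrices summing to $\bm{M}$. $\Pi_{\bm{a},\bm{b}}=\{\bm{P}\in\mathbb{R}_+^{n\times m}:\bm{P}\bm{1}_m=\bm{a},\ \bm{P}^{\mathrm T}\bm{1}_n=\bm{b}\}$. $\mathrm{KL}$ is the (generalized) Kullback–Leibler divergence. $\Delta_d$ is the probability simplex in $\mathbb{R}^d$. *)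

From HB Require Import structures.
From mathcomp Require Import all_boot all_order all_algebra.
From mathcomp Require Import all_classical all_reals all_analysis.
Set Implicit Arguments. Unset Strict Implicit. Unset Printing Implicit Defensive.
Import Order.TTheory GRing.Theory Num.Theory.
Local Open Scope classical_set_scope.
Local Open Scope ring_scope.

Section OTDefs.
Variable R : realType.

Definition mx_nonneg n m (P : 'M[R]_(n, m)) : Prop := forall i j, 0 <= P i j.

(* rk_+(P) <= r : P is a sum of at most r nonnegative rank-one matrices
   (k = 0 allowed: the empty sum, for P = 0). *)
Definition nnrank_le n m (P : 'M[R]_(n, m)) (r : nat) : Prop :=
  exists k : nat, (k <= r)%N /\
    exists M : 'I_k -> 'M[R]_(n, m),
      (forall l, mx_nonneg (M l) /\ \rank (M l) = 1%N) /\ P = \sum_(l < k) M l.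

Definition rowsum n m (P : 'M[R]_(n, m)) (i : 'I_n) : R := \sum_(j < m) P i j.
Definition colsum n m (P : 'M[R]_(n, m)) (j : 'I_m) : R := \sum_(i < n) P i j.

Definition frob n m (C P : 'M[R]_(n, m)) : R := \sum_(i < n) \sum_(j < m) C i j * P i j.

(* generalized KL term x ln(x/y) - x + y, with 0 ln 0 = 0 and
   value +oo when y = 0 < x *)
Definition klterm (x y : R) : \bar R :=
  if y == 0 then (if x == 0 then 0%E else +oo%E)
  else (x * ln (x / y) - x + y)%:E.

Definition KL n (x y : 'I_n -> R) : \bar R := (\sum_(i < n) klterm (x i) (y i))%E.

Definition SRobj n m (C : 'M[R]_(n, m)) (a : 'I_n -> R) (tau : R) (P : 'M[R]_(n, m))
  : \bar R := ((frob C P)%:E + tau%:E * KL (rowsum P) a)%E.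

Definition SRW n m (C : 'M[R]_(n, m)) (a : 'I_n -> R) (b : 'I_m -> R) (tau : R) : \bar R :=
  ereal_inf [set SRobj C a tau P | P in
              [set P : 'M[R]_(n, m) | mx_nonneg P /\ forall j, colsum P j = b j]].

Definition SRW_r n m (C : 'M[R]_(n, m)) (a : 'I_n -> R) (b : 'I_m -> R) (tau : R)
  (r : nat) : \bar R :=
  ereal_inf [set SRobj C a tau P | P in
              [set P : 'M[R]_(n, m) | mx_nonneg P /\ (forall j, colsum P j = b j)
                                      /\ nnrank_le P r]].

Definition Pi_ab n m (a : 'I_n -> R) (b : 'I_m -> R) : set 'M[R]_(n, m) :=
  [set P | mx_nonneg P /\ (forall i, rowsum P i = a i) /\ (forall j, colsum P j = b j)].

Definition W n m (C : 'M[R]_(n, m)) (a : 'I_n -> R) (b : 'I_m -> R) : \bar R :=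
  ereal_inf [set (frob C P)%:E | P in Pi_ab a b].

Definition W_r n m (C : 'M[R]_(n, m)) (a : 'I_n -> R) (b : 'I_m -> R) (r : nat) : \bar R :=
  ereal_inf [set (frob C P)%:E | P in [set P | Pi_ab a b P /\ nnrank_le P r]].

(* max_{p,q} C_pq (valid for nonnegative C, n, m >= 1) and min_{p,q} C_pq
   (valid for n, m >= 1) *)
Definition mxmax n m (C : 'M[R]_(n, m)) : R :=
  \big[Num.max/0]_(pq : 'I_n * 'I_m) C pq.1 pq.2.
Definition mxmin n m (C : 'M[R]_(n, m)) : R :=
  \big[Num.min/mxmax C]_(pq : 'I_n * 'I_m) C pq.1 pq.2.

Definition in_simplex d (x : 'I_d -> R) : Prop :=
  (forall i, 0 <= x i) /\ \sum_(i < d) x i = 1.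

End OTDefs.

From HB Require Import structures.
From mathcomp Require Import all_boot all_order all_algebra.
From mathcomp Require Import all_classical all_reals all_analysis.
From mathcomp Require Import ring lra.
Set Implicit Arguments. Unset Strict Implicit. Unset Printing Implicit Defensive.
Import Order.TTheory GRing.Theory Num.Theory.
Local Open Scope ring_scope.

(* Keep the r-1 heaviest rows of an admissible plan P and replace the other rows by
   the product of their row and column marginals, normalised by their total mass s.
   The result has the same marginals as P (hence the same KL term), nonnegative rank
   at most r, and costs at most (max C - min C) s more than P.  The r-1 heaviest rows
   carry at least the fraction (r-1)/n of the total mass c_b, so
   s <= (1 - (r-1)/n) c_b <= c_b ln (n/(r-1)); transposing when m < n gives min{n,m}.
   As the rank-constrained problem is a restriction of the unconstrained one, the
   two infima differ by at most this amount. *)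

Section Marginals.
Variable R : realType.

Definition outer n m (u : 'I_n -> R) (v : 'I_m -> R) : 'M[R]_(n, m) :=
  \matrix_(i, j) (u i * v j).

Lemma outer_nonneg n m (u : 'I_n -> R) (v : 'I_m -> R) :
  (forall i, 0 <= u i) -> (forall j, 0 <= v j) -> mx_nonneg (outer u v).
Proof. by move=> u0 v0 i j; rewrite mxE mulr_ge0. Qed.

Lemma rowsum_outer n m (u : 'I_n -> R) (v : 'I_m -> R) i :
  rowsum (outer u v) i = u i * \sum_j v j.
Proof. by rewrite /rowsum mulr_sumr; apply: eq_bigr => j _; rewrite mxE. Qed.

Lemma colsum_outer n m (u : 'I_n -> R) (v : 'I_m -> R) j :
  colsum (outer u v) j = (\sum_i u i) * v j.
Proof. by rewrite /colsum mulr_suml; apply: eq_bigr => i _; rewrite mxE. Qed.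

Lemma rowsum_ge0 n m (P : 'M[R]_(n, m)) i : mx_nonneg P -> 0 <= rowsum P i.
Proof. by move=> P0; apply: sumr_ge0 => j _. Qed.

Lemma sum_rowsum n m (P : 'M[R]_(n, m)) : \sum_i rowsum P i = \sum_j colsum P j.
Proof. exact: exchange_big. Qed.

Lemma rowsum_tr n m (P : 'M[R]_(n, m)) : rowsum P^T =1 colsum P.
Proof. by move=> j; apply: eq_bigr => i _; rewrite mxE. Qed.

Lemma colsum_tr n m (P : 'M[R]_(n, m)) : colsum P^T =1 rowsum P.
Proof. by move=> i; apply: eq_bigr => j _; rewrite mxE. Qed.

Lemma frob_ge0 n m (C P : 'M[R]_(n, m)) : mx_nonneg C -> mx_nonneg P -> 0 <= frob C P.
Proof.
by move=> C0 P0; rewrite sumr_ge0 // => i _; rewrite sumr_ge0 // => j _; rewrite mulr_ge0.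
Qed.

Lemma frob_tr n m (C P : 'M[R]_(n, m)) : frob C^T P^T = frob C P.
Proof.
by rewrite /frob exchange_big; apply: eq_bigr => i _; apply: eq_bigr => j _; rewrite !mxE.
Qed.

End Marginals.

Section NonnegativeRank.
Variable R : realType.

Lemma nnrank_le0 n m : nnrank_le (0 : 'M[R]_(n, m)) 0.
Proof. by exists 0%N; split=> //; exists (fun=> 0); split; [case | rewrite big_ord0]. Qed.

Lemma nnrank_le1 n m (M : 'M[R]_(n, m)) :
  mx_nonneg M -> (\rank M <= 1)%N -> nnrank_le M 1.
Proof.
move=> M0 rkM; have [->|Mn0] := eqVneq M 0.
  by have [k [k0 decomp]] := nnrank_le0 n m; exists k; split; first exact: leq_trans k0 _.
exists 1%N; split=> //; exists (fun=> M); split; last by rewrite big_ord1.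
by move=> _; split=> //; apply/eqP; rewrite eqn_leq rkM lt0n mxrank_eq0.
Qed.

Lemma nnrank_le_outer n m (u : 'I_n -> R) (v : 'I_m -> R) :
  (forall i, 0 <= u i) -> (forall j, 0 <= v j) -> nnrank_le (outer u v) 1.
Proof.
move=> u0 v0; apply: nnrank_le1; first exact: outer_nonneg.
have -> : outer u v = \col_i u i *m \row_j v j.
  by apply/matrixP => i j; rewrite !mxE big_ord1 !mxE.
exact: leq_trans (mxrankM_maxl _ _) (rank_leq_col _).
Qed.

Lemma nnrank_leD n m (A B : 'M[R]_(n, m)) r s :
  nnrank_le A r -> nnrank_le B s -> nnrank_le (A + B) (r + s).
Proof.
move=> [k [kr [F [HF ->]]]] [l [ls [G [HG ->]]]].
exists (k + l)%N; split; first exact: leq_add.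
exists (fun i => match fintype.split i with inl i => F i | inr i => G i end); split.
  by move=> i; case: fintype.split.
by rewrite big_split_ord; congr (_ + _); apply: eq_bigr => i _;
  [rewrite (unsplitK (inl _ i)) | rewrite (unsplitK (inr _ i))].
Qed.

Lemma nnrank_le_sum (I : finType) (A : {pred I}) n m (F : I -> 'M[R]_(n, m)) :
  (forall i, nnrank_le (F i) 1) -> nnrank_le (\sum_(i in A) F i) #|A|.
Proof.
move=> F1; rewrite -sum1_card.
apply: (big_ind2 (fun M k => nnrank_le M k)) => //; first exact: nnrank_le0.
by move=> *; exact: nnrank_leD.
Qed.

Lemma nnrank_le_tr n m (M : 'M[R]_(n, m)) r : nnrank_le M r -> nnrank_le M^T r.
Proof.
move=> [k [kr [F [HF ->]]]]; exists k; split=> //.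
exists (fun l => (F l)^T); split; last by rewrite raddf_sum.
move=> l; have [F0 rkF] := HF l; split; last by rewrite mxrank_tr.
by move=> i j; rewrite mxE.
Qed.

End NonnegativeRank.

Lemma mulfK_le (R : realFieldType) (x s : R) : 0 <= x -> x <= s -> x * s / s = x.
Proof.
move=> x0 xs; have [s0|sn0] := eqVneq s 0; last exact: mulfK.
by rewrite s0 mulr0 mul0r; apply/le_anti; rewrite x0 -s0 xs.
Qed.

Section Collapse.
Variables (R : realType) (n m : nat) (P : 'M[R]_(n, m)) (W : {set 'I_n}).
Hypothesis P0 : mx_nonneg P.

Definition rest_mass : R := \sum_(i | i \notin W) rowsum P i.
Definition rest_colsum j : R := \sum_(i | i \notin W) P i j.
Definition rest_weight i : R := if i \in W then 0 else rowsum P i / rest_mass.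

Definition collapse : 'M[R]_(n, m) :=
  \matrix_(i, j) (if i \in W then P i j else rest_weight i * rest_colsum j).

Lemma rest_colsum_ge0 j : 0 <= rest_colsum j.
Proof. by apply: sumr_ge0 => i _. Qed.

Lemma rest_weight_ge0 i : 0 <= rest_weight i.
Proof.
rewrite /rest_weight; case: ifP => // _.
by rewrite divr_ge0 ?rowsum_ge0 // sumr_ge0 // => k _; rewrite rowsum_ge0.
Qed.

Lemma sum_rest_colsum : \sum_j rest_colsum j = rest_mass.
Proof. exact: exchange_big. Qed.

Lemma collapse_nonneg : mx_nonneg collapse.
Proof.
move=> i j; rewrite mxE; case: ifP => // _.
by rewrite mulr_ge0 ?rest_weight_ge0 ?rest_colsum_ge0.
Qed.

Lemma rowsum_collapse : rowsum collapse =1 rowsum P.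
Proof.
move=> i; rewrite /rowsum; have [iW|iW] := boolP (i \in W).
  by apply: eq_bigr => j _; rewrite mxE iW.
under eq_bigr => j _ do rewrite mxE (negbTE iW).
rewrite -mulr_sumr -/(rowsum P i) sum_rest_colsum /rest_weight (negbTE iW).
rewrite mulrAC mulfK_le ?rowsum_ge0 // /rest_mass (bigD1 i) //= lerDl.
by apply: sumr_ge0 => k _; rewrite rowsum_ge0.
Qed.

Lemma colsum_collapse : colsum collapse =1 colsum P.
Proof.
move=> j; rewrite /colsum (bigID (mem W)) [in RHS](bigID (mem W)) /=.
congr (_ + _); first by apply: eq_bigr => i iW; rewrite mxE iW.
rewrite -/(rest_colsum j).
have -> : \sum_(i | i \notin W) collapse i j = rest_mass / rest_mass * rest_colsum j.
  rewrite /rest_mass !mulr_suml; apply: eq_bigr => i /negbTE iW.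
  by rewrite mxE /rest_weight iW.
rewrite mulrAC [_ * rest_colsum j]mulrC mulfK_le ?rest_colsum_ge0 //.
rewrite -sum_rest_colsum (bigD1 j) //= lerDl.
by apply: sumr_ge0 => k _; rewrite rest_colsum_ge0.
Qed.

Lemma collapse_decomposition :
  collapse = \sum_(i in W) outer (fun k => (k == i)%:R) (fun j => P i j)
             + outer rest_weight rest_colsum.
Proof.
apply/matrixP => k j; rewrite !mxE summxE.
under eq_bigr => i _ do rewrite mxE.
have [kW|kW] := boolP (k \in W).
  rewrite /rest_weight kW mul0r addr0 (bigD1 k) //= eqxx mul1r big1 ?addr0 //.
  by move=> i /andP[_ ik]; rewrite eq_sym (negbTE ik) mul0r.
rewrite big1 ?add0r // => i iW.
by case: eqP => [ki|]; [rewrite ki iW in kW | rewrite mul0r].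
Qed.

Lemma nnrank_le_collapse : nnrank_le collapse #|W|.+1.
Proof.
rewrite collapse_decomposition -addn1; apply: nnrank_leD.
  by apply: nnrank_le_sum => i; apply: nnrank_le_outer => [k|j]; rewrite ?ler0n.
exact: nnrank_le_outer rest_weight_ge0 rest_colsum_ge0.
Qed.

Lemma frob_collapse_le (C : 'M[R]_(n, m)) lo hi :
  (forall i j, lo <= C i j <= hi) ->
  frob C collapse <= frob C P + (hi - lo) * rest_mass.
Proof.
move=> HC; rewrite /rest_mass big_mkcond mulr_sumr -big_split /=.
apply: ler_sum => i _; case: ifPn => [iW|/negbNE iW]; last first.
  have -> : \sum_j C i j * collapse i j = \sum_j C i j * P i j.
    by apply: eq_bigr => j _; rewrite /collapse mxE iW.
  by rewrite mulr0 addr0.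
have cost_le : \sum_j C i j * collapse i j <= hi * rowsum P i.
  rewrite -rowsum_collapse /rowsum mulr_sumr; apply: ler_sum => j _.
  by rewrite ler_wpM2r ?collapse_nonneg //; case/andP: (HC i j).
have cost_ge : lo * rowsum P i <= \sum_j C i j * P i j.
  rewrite /rowsum mulr_sumr; apply: ler_sum => j _.
  by rewrite ler_wpM2r //; case/andP: (HC i j).
lra.
Qed.

End Collapse.

Section TopRows.
Variable R : realType.

Lemma exists_dominating_set n (x : 'I_n -> R) k : (k <= n)%N ->
  exists2 W : {set 'I_n}, #|W| = k & forall i j, i \in W -> j \notin W -> x j <= x i.
Proof.
elim: k => [|k IH] kn.
  by exists finset.set0 => [|i j]; rewrite ?cards0 ?inE.
have [W cardW domW] := IH (ltnW kn).
have cardWC : #|~: W| = (n - k)%N.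
  by apply/eqP; rewrite -(eqn_add2l k) subnKC ?(ltnW kn) // -cardW cardsC card_ord.
have [j0 j0W] : exists j0, j0 \in ~: W.
  by apply/card_gt0P; rewrite cardWC subn_gt0.
case: (arg_maxP x j0W) => jm jmW jm_max.
have jm_notin : jm \notin W by rewrite -finset.in_setC; exact: jmW.
exists (jm |: W); first by rewrite cardsU1 jm_notin cardW.
move=> i j; rewrite !finset.in_setU1 negb_or => /orP[/eqP -> | iW] /andP[jjm jW].
  by apply: jm_max; have : j \in ~: W by rewrite finset.in_setC.
exact: domW.
Qed.

Lemma dominating_set_mass n (x : 'I_n -> R) (W : {set 'I_n}) :
  (forall i j, i \in W -> j \notin W -> x j <= x i) ->
  n%:R * \sum_(i | i \notin W) x i <= (n - #|W|)%:R * \sum_i x i.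
Proof.
move=> domW.
set k := #|W|; set S := \sum_(i in W) x i; set s := \sum_(i | i \notin W) x i.
have kn : (k <= n)%N by rewrite -[n in (_ <= n)%N]card_ord max_card.
have cardWC : #|(fun i : 'I_n => i \notin W)| = (n - k)%N.
  by apply/eqP; rewrite -(eqn_add2l k) subnKC // cardC card_ord.
have avg : k%:R * s <= (n - k)%:R * S.
  have : \sum_(i in W) \sum_(j | j \notin W) x j <= \sum_(j | j \notin W) \sum_(i in W) x i.
    rewrite [in X in _ <= X]exchange_big /=.
    by apply: ler_sum => i iW; apply: ler_sum => j; exact: domW.
  by rewrite -/s -/S !sumr_const cardWC -/k !mulr_natl.
rewrite (bigID (mem W)) /= -/S -/s -[n in n%:R](subnKC kn) natrD.
by rewrite mulrDl mulrDr lerD2r.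
Qed.

End TopRows.

Lemma one_subV_le_ln (R : realType) (x : R) : 0 < x -> 1 - x^-1 <= ln x.
Proof.
move=> x0; have := @le_ln1Dx R (x^-1 - 1).
rewrite subrKC lnV ?posrE // ltrBrDr addrC subrr invr_gt0.
by move=> /(_ x0); lra.
Qed.

Section RankReduction.
Variables (R : realType) (n m : nat) (C : 'M[R]_(n, m)) (lo hi : R).
Hypotheses (C_bounds : forall i j, lo <= C i j <= hi) (lo_le_hi : lo <= hi).

Lemma rank_reduction_rows (P : 'M[R]_(n, m)) k :
  mx_nonneg P -> (0 < k <= n)%N ->
  exists Q : 'M[R]_(n, m),
    [/\ mx_nonneg Q, rowsum Q =1 rowsum P, colsum Q =1 colsum P, nnrank_le Q k.+1 &
        frob C Q <= frob C P + (\sum_i rowsum P i) * (hi - lo) * ln (n%:R / k%:R)].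
Proof.
move=> P0 /andP[k_gt0 kn].
have [W cardW domW] := exists_dominating_set (rowsum P) kn.
exists (collapse P W); split.
- exact: collapse_nonneg.
- exact: rowsum_collapse.
- exact: colsum_collapse.
- by rewrite -cardW; exact: nnrank_le_collapse.
have n_pos : 0 < n%:R :> R by rewrite ltr0n (leq_trans k_gt0).
have k_pos : 0 < k%:R :> R by rewrite ltr0n.
set T := \sum_i rowsum P i.
have T_ge0 : 0 <= T by apply: sumr_ge0 => i _; exact: rowsum_ge0.
have rest_le : rest_mass P W <= (1 - k%:R / n%:R) * T.
  rewrite -(ler_pM2l n_pos).
  have -> : n%:R * ((1 - k%:R / n%:R) * T) = (n - k)%:R * T.
    by rewrite natrB // mulrA mulrBr mulr1 mulrCA divff ?mulr1 // gt_eqF.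
  by rewrite -cardW; exact: dominating_set_mass.
have ln_ge : 1 - k%:R / n%:R <= ln (n%:R / k%:R : R).
  by rewrite -(invf_div (n%:R : R)); apply: one_subV_le_ln; rewrite divr_gt0.
apply: le_trans (frob_collapse_le W P0 C_bounds) _; rewrite lerD2l.
have width_ge0 : 0 <= hi - lo by rewrite subr_ge0.
have := ler_wpM2l width_ge0 rest_le.
have := ler_wpM2r (mulr_ge0 T_ge0 width_ge0) ln_ge.
lra.
Qed.

End RankReduction.

Lemma rank_reduction (R : realType) n m (C P : 'M[R]_(n, m)) lo hi k :
  (forall i j, lo <= C i j <= hi) -> lo <= hi ->
  mx_nonneg P -> (0 < k <= minn n m)%N ->
  exists Q : 'M[R]_(n, m),
    [/\ mx_nonneg Q, rowsum Q =1 rowsum P, colsum Q =1 colsum P, nnrank_le Q k.+1 &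
        frob C Q <= frob C P
                    + (\sum_i rowsum P i) * (hi - lo) * ln ((minn n m)%:R / k%:R)].
Proof.
move=> C_bounds lo_le_hi P0; have [nm|mn] := leqP n m.
  exact: rank_reduction_rows.
move=> km.
have CT_bounds : forall j i, lo <= C^T j i <= hi by move=> j i; rewrite mxE.
have PT0 : mx_nonneg P^T by move=> j i; rewrite mxE.
have [Q [Q0 rowQ colQ rkQ costQ]] := rank_reduction_rows CT_bounds lo_le_hi PT0 km.
exists Q^T; split.
- by move=> i j; rewrite mxE.
- by move=> i; rewrite rowsum_tr colQ colsum_tr.
- by move=> j; rewrite colsum_tr rowQ rowsum_tr.
- exact: nnrank_le_tr.
rewrite -(frob_tr C) trmxK -(frob_tr C P) sum_rowsum.
by under eq_bigr => j _ do rewrite -rowsum_tr.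
Qed.

Lemma mx_entry_bounds (R : realType) n m (C : 'M[R]_(n, m)) i j :
  mxmin C <= C i j <= mxmax C.
Proof.
by rewrite (bigmin_le _ (i, j) (fun pq => C pq.1 pq.2))
           (le_bigmax _ (fun pq => C pq.1 pq.2) (i, j)).
Qed.

Lemma nnrank_approx (R : realType) n m (C P : 'M[R]_(n, m)) r :
  mx_nonneg P -> (2 <= r)%N -> (r <= minn n m)%N ->
  exists Q : 'M[R]_(n, m),
    [/\ mx_nonneg Q, rowsum Q =1 rowsum P, colsum Q =1 colsum P, nnrank_le Q r &
        frob C Q <= frob C P + (\sum_i rowsum P i) * (mxmax C - mxmin C)
                                * ln ((minn n m)%:R / (r.-1)%:R)].
Proof.
move=> P0 r_ge2 r_le; have r_gt0 : (0 < r)%N by rewrite ltnW.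
have /andP[rn rm] : (r <= n)%N && (r <= m)%N by rewrite -leq_min.
have entry := mx_entry_bounds C (Ordinal (leq_trans r_gt0 rn))
                                (Ordinal (leq_trans r_gt0 rm)).
have lo_le_hi : mxmin C <= mxmax C by case/andP: entry; exact: le_trans.
have k_bounds : (0 < r.-1 <= minn n m)%N.
  by rewrite -ltnS prednK // r_ge2 (leq_trans (leq_pred r)).
have [Q [Q0 rowQ colQ rkQ costQ]] := rank_reduction (mx_entry_bounds C) lo_le_hi P0 k_bounds.
by exists Q; split; rewrite // -(prednK r_gt0).
Qed.

Lemma ereal_inf_subset_gap (R : realType) (T : Type) (A B : set T) (f : T -> \bar R)
    (e : R) :
  (B `<=` A)%classic -> (forall x, A x -> (0 <= f x)%E) ->
  (exists2 x, A x & (f x < +oo)%E) ->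
  (forall x, A x -> exists2 y, B y & (f y <= f x + e%:E)%E) ->
  (`| ereal_inf [set f x | x in B] - ereal_inf [set f x | x in A] | <= e%:E)%E.
Proof.
move=> BA f_ge0 [x0 Ax0 fx0_fin] approx.
set lA := ereal_inf [set f x | x in A]; set lB := ereal_inf [set f x | x in B].
have lA_ge0 : (0 <= lA)%E by apply/ereal_infP => _ [x Ax <-]; exact: f_ge0.
have lA_le_lB : (lA <= lB)%E by exact: ereal_inf_le_tmp (image_subset f BA).
have lB_le x : A x -> (lB <= f x + e%:E)%E.
  move=> Ax; have [y By fy_le] := approx x Ax.
  by apply: le_trans fy_le; apply: ereal_inf_lbound; exists y.
have lB_le_lA : (lB - e%:E <= lA)%E.
  by apply/ereal_infP => _ [x Ax <-]; rewrite leeBlDr // lB_le.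
have lB_fin : lB \is a fin_num.
  rewrite fin_numElt (lt_le_trans _ (le_trans lA_ge0 lA_le_lB)) ?ltNy0 //=.
  by apply: le_lt_trans (lB_le _ Ax0) _; rewrite lte_add_pinfty ?ltry.
have lA_fin : lA \is a fin_num.
  rewrite fin_numElt (lt_le_trans _ lA_ge0) ?ltNy0 //=.
  by rewrite (le_lt_trans lA_le_lB) ?ltey_eq ?lB_fin.
move: lA_ge0 lA_le_lB lB_le_lA; rewrite -(fineK lA_fin) -(fineK lB_fin) -EFinB.
rewrite !lee_fin => _ lA_le_lB lB_le_lA.
by rewrite ger0_norm ?subr_ge0 //; lra.
Qed.

Lemma klterm_ge0 (R : realType) (x y : R) : 0 <= x -> 0 <= y -> (0 <= klterm x y)%E.
Proof.
rewrite /klterm => x_ge0 y_ge0; case: eqP => [_|/eqP y_neq0].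
  by case: eqP => _; rewrite ?leey.
rewrite lee_fin; have [->|x_neq0] := eqVneq x 0; first by rewrite mul0r subrr add0r.
have x_gt0 : 0 < x by rewrite lt_def x_neq0.
have y_gt0 : 0 < y by rewrite lt_def y_neq0.
have := ler_wpM2l x_ge0 (one_subV_le_ln (divr_gt0 x_gt0 y_gt0)).
by rewrite invf_div mulrBr mulr1 mulrCA divff // mulr1; lra.
Qed.

Lemma KL_fin_num (R : realType) n (x y : 'I_n -> R) :
  (forall i, y i = 0 -> x i = 0) -> KL x y \is a fin_num.
Proof.
move=> supp; apply/sum_fin_numP => i _ _; rewrite /klterm.
by case: eqP => [/supp ->|]; rewrite ?eqxx.
Qed.

Lemma SRW_r_gap (R : realType) n m (C : 'M[R]_(n, m)) a b tau r :
  mx_nonneg C -> (forall i, 0 <= a i) -> (exists i, 0 < a i) ->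
  (forall j, 0 < b j) -> 0 < tau -> (2 <= r)%N -> (r <= minn n m)%N ->
  (`| SRW_r C a b tau r - SRW C a b tau | <=
     ((\sum_j b j) * (mxmax C - mxmin C) * ln ((minn n m)%:R / (r.-1)%:R))%:E)%E.
Proof.
move=> C0 a0 [i0 a_i0] b0 tau0 r_ge2 r_le.
apply: ereal_inf_subset_gap => [P [P0 [colP _]] // | P [P0 _] | | P [P0 colP]].
- apply: adde_ge0; first by rewrite lee_fin frob_ge0.
  apply: mule_ge0; first by rewrite lee_fin ltW.
  by apply: sume_ge0 => i _; rewrite klterm_ge0 ?rowsum_ge0.
- set sa := \sum_i a i.
  have sa_gt0 : 0 < sa.
    by rewrite /sa (bigD1 i0) //= ltr_pwDl // sumr_ge0.
  exists (outer (fun i => a i / sa) b).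
    split; first by apply: outer_nonneg => [i|j];
                      [exact: divr_ge0 (a0 i) (ltW sa_gt0) | exact: ltW].
    by move=> j; rewrite colsum_outer -mulr_suml divff ?mul1r // gt_eqF.
  rewrite /SRobj ltey_eq fin_numD fin_numM ?KL_fin_num // => i ai0.
  by rewrite rowsum_outer ai0 !mul0r.
- have [Q [Q0 rowQ colQ rkQ costQ]] := nnrank_approx C P0 r_ge2 r_le.
  exists Q; first by split=> //; split=> // j; rewrite colQ.
  rewrite /SRobj.
  have -> : KL (rowsum Q) a = KL (rowsum P) a by apply: eq_bigr => i _; rewrite rowQ.
  rewrite addeAC -EFinD leeD2r // lee_fin.
  by move: costQ; rewrite sum_rowsum (eq_bigr _ (fun j _ => colP j)).
Qed.

Lemma W_r_gap (R : realType) n m (C : 'M[R]_(n, m)) a b r :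
  mx_nonneg C -> in_simplex a -> in_simplex b -> (2 <= r)%N -> (r <= minn n m)%N ->
  (`| W_r C a b r - W C a b | <=
     ((mxmax C - mxmin C) * ln ((minn n m)%:R / (r.-1)%:R))%:E)%E.
Proof.
move=> C0 [a0 sum_a] [b0 sum_b] r_ge2 r_le.
apply: ereal_inf_subset_gap => [P [] // | P [P0 _] | | P [P0 [rowP colP]]].
- by rewrite lee_fin frob_ge0.
- exists (outer a b); last exact: ltry.
  split; first exact: outer_nonneg.
  by split=> [i|j]; rewrite (rowsum_outer, colsum_outer) (sum_b, sum_a) (mulr1, mul1r).
- have [Q [Q0 rowQ colQ rkQ costQ]] := nnrank_approx C P0 r_ge2 r_le.
  exists Q; first by split=> //; split=> //; split=> [i|j]; rewrite (rowQ, colQ).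
  rewrite -EFinD lee_fin; move: costQ.
  by rewrite (eq_bigr _ (fun i _ => rowP i)) sum_a mul1r.
Qed.

Theorem proposition6 :
  (forall (R : realType) (n m : nat) (C : 'M[R]_(n, m)) (a : 'I_n -> R)
          (b : 'I_m -> R) (tau : R) (r : nat),
      mx_nonneg C -> (forall i, 0 <= a i) -> (exists i, 0 < a i) ->
      (forall j, 0 < b j) -> 0 < tau ->
      (2 <= r)%N -> (r <= minn n m)%N ->
      (`| SRW_r C a b tau r - SRW C a b tau | <=
         ((\sum_(j < m) b j) * (mxmax C - mxmin C)
            * ln ((minn n m)%:R / (r.-1)%:R))%:E)%E)
  /\
  (forall (R : realType) (n m : nat) (C : 'M[R]_(n, m)) (a : 'I_n -> R)
          (b : 'I_m -> R) (r : nat),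
      mx_nonneg C -> in_simplex a -> in_simplex b ->
      (2 <= r)%N -> (r <= minn n m)%N ->
      (`| W_r C a b r - W C a b | <=
         ((mxmax C - mxmin C) * ln ((minn n m)%:R / (r.-1)%:R))%:E)%E).
Proof. split; [exact: SRW_r_gap | exact: W_r_gap]. Qed.
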